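(* Let $G$ be an arc-transitive group of automorphisms of a connected symmetric graph $X=X_0$, and let $X_2\xrightarrow{\wp_2}X_1\xrightarrow{\wp_1}X_0$ be a $G$-admissible chain of two consecutive $2$-covers, with lifted groups $G=G_0$, $G_1$, $G_2$. If $\wp_2$ is split-transitive (respectively, split-sectional) relative to $G_1$, then there exists a $G$-admissible chain $X_2\xrightarrow{\wp_2'}X_1'\xrightarrow{\wp_1'}X_0$ of two consecutive $2$-covers such that $\wp_1'$ is split-transitive (respectively, split-sectional) relative to $G$.
   Context: Graphs are finite, simple and connected; maps are composed on the right. A regular covering projection $\wp\colon\tilde Y\to Y$ is a surjective graph homomorphism, locally bijective on neighbourhoods, whose group $\mathrm{CT}(\wp)$ of covering transformations (automorphisms $c$ with $c\wp=\wp$) acts regularly on fibres; a $2$-cover has $\mathrm{CT}(\wp)\cong\mathbb{Z}_2$. A lift of $g\in\mathrm{Aut}\,Y$ is $\tilde g$ with $\wp g=\tilde g\wp$; if all elements of $K\leq\mathrm{Aut}\,Y$ lift, the lifted group $\tilde K$ is the group of all lifts. $\wp$ is $K$-split if $\mathrm{CT}(\wp)$ has a complement in $\tilde K$. A section is a vertex set meeting each fibre in exactly one vertex; a complement is sectional if it leaves some section invariant and transitive if it is transitive on $V(\tilde Y)$. For $K$ vertex-transitive, $\wp$ is split-sectional (resp. split-transitive) relative to $K$ if it is $K$-split and all complements of $\mathrm{CT}(\wp)$ in $\tilde K$ are sectional (resp. transitive). A chain $X_n\xrightarrow{\wp_n}\cdots\xrightarrow{\wp_1}X_0$ of consecutive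 $2$-covers is $G$-admissible if there are $G=G_0,G_1,\dots,G_n$ with $G_j\leq\mathrm{Aut}\,X_j$ the lift of $G_{j-1}$ along $\wp_j$. *)

From HB Require Import structures.
From mathcomp Require Import all_boot all_order all_fingroup.
Set Implicit Arguments. Unset Strict Implicit. Unset Printing Implicit Defensive.
Local Open Scope group_scope.

Record graph := Graph {
  vert : finType;
  adj : rel vert;
  adj_sym : symmetric adj;
  adj_irr : irreflexive adj;
  adj_conn : forall x y : vert, connect adj x y }.

Arguments adj : clear implicits.

Definition Aut (Y : graph) : {set {perm vert Y}} :=
  [set g : {perm vert Y} | [forall x, forall y, adj Y (g x) (g y) == adj Y x y]].

Section Graphs.
Variables (Y Yt : graph).

Definition arc_transitive (G : {set {perm vert Y}}) : Prop :=
  G \subset Aut Y /\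
  forall u v u' v' : vert Y, adj Y u v -> adj Y u' v' ->
    exists2 g, g \in G & g u = u' /\ g v = v'.

Definition vertex_transitive (G : {set {perm vert Y}}) : Prop :=
  [transitive G, on [set: vert Y] | 'P].

Variable p : vert Yt -> vert Y.

Definition covering_projection : Prop :=
  [/\ forall y, exists x, p x = y,
      forall x x', adj Yt x x' -> adj Y (p x) (p x') ,
      forall x, {in adj Yt x &, injective p} &
      forall x w, adj Y (p x) w -> exists2 x', adj Yt x x' & p x' = w].

Definition CT : {set {perm vert Yt}} :=
  [set c in Aut Yt | [forall x, p (c x) == p x]].

Definition regular_cover : Prop :=
  covering_projection /\
  forall x x', p x = p x' -> exists! c, c \in CT /\ c x = x'.

Definition two_cover : Prop := regular_cover /\ #|CT| = 2%N.

(* gt is a lift of g:  p g = gt p  (maps composed on the right). *)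
Definition is_lift (g : {perm vert Y}) (gt : {perm vert Yt}) : bool :=
  [forall x, p (gt x) == g (p x)].

Definition lifts (K : {set {perm vert Y}}) : Prop :=
  forall g, g \in K -> exists2 gt, gt \in Aut Yt & is_lift g gt.

Definition lifted (K : {set {perm vert Y}}) : {set {perm vert Yt}} :=
  [set gt in Aut Yt | [exists g in K, is_lift g gt]].

Definition split (K : {set {perm vert Y}}) : Prop :=
  exists H : {group {perm vert Yt}}, H \in [complements to CT in lifted K].

Definition section (S : {set vert Yt}) : Prop :=
  forall y : vert Y, #|[set x in S | p x == y]| = 1%N.

Definition sectional (H : {set {perm vert Yt}}) : Prop :=
  exists2 S, section S & forall h, h \in H -> [set h x | x in S] = S.

Definition transitive_cmp (H : {set {perm vert Yt}}) : Prop :=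
  [transitive H, on [set: vert Yt] | 'P].

Definition split_sectional (K : {set {perm vert Y}}) : Prop :=
  [/\ vertex_transitive K, lifts K, split K &
      forall H : {group {perm vert Yt}},
        H \in [complements to CT in lifted K] -> sectional H].

Definition split_transitive (K : {set {perm vert Y}}) : Prop :=
  [/\ vertex_transitive K, lifts K, split K &
      forall H : {group {perm vert Yt}},
        H \in [complements to CT in lifted K] -> transitive_cmp H].

End Graphs.

(* A G-admissible chain X2 -p2-> X1 -p1-> X0 of two consecutive 2-covers:
   G_1 = lifted p1 G and G_2 = lifted p2 G_1. *)
Definition admissible2 (X0 X1 X2 : graph) (G : {set {perm vert X0}})
  (p1 : vert X1 -> vert X0) (p2 : vert X2 -> vert X1) : Prop :=
  [/\ two_cover p1, two_cover p2, lifts p1 G & lifts p2 (lifted p1 G)].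

(* The covering transformations K of the composite 4-fold cover p1 p2 : X2 -> X0
   form a normal subgroup of order 4 of G2 containing T = CT(p2).  A complement H
   of T in G2 has index 2, hence is normal, so N = H :&: K has order 2 and
   K = T * N.  Collapsing the N-orbits of X2 gives X1': the projection X2 -> X1'
   is a 2-cover with group N, and X1' -> X0 is a 2-cover whose group is the image
   of T under the induced map psi : G2 -> Aut X1', a morphism with kernel N onto
   the lift of G.  So psi maps H to a complement of CT(X1' -> X0), and pulls every
   such complement back to a complement of T in G2; the pull-back is transitive
   (or leaves a section of p2 invariant) by hypothesis, and this descends along
   X2 -> X1'. *)

From Pilot Require Import Defs.
From mathcomp Require Import all_boot all_order all_fingroup.
(* Re-import so that [Aut] denotes graph automorphisms, not [automorphism.Aut]. *)
Import Defs.
Set Implicit Arguments. Unset Strict Implicit. Unset Printing Implicit Defensive.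
Local Open Scope group_scope.

Lemma connect_homo (T T' : finType) (e : rel T) (e' : rel T') (h : T -> T') :
  {homo h : x y / e x y >-> e' x y} ->
  {homo h : x y / connect e x y >-> connect e' x y}.
Proof.
move=> he x y /connectP[s]; elim: s x => [|z s IHs] x /=; first by move=> _ ->.
by case/andP=> /he exz /IHs sz /sz; apply: connect_trans (connect1 exz).
Qed.

Lemma AutP (Y : graph) (g : {perm vert Y}) :
  reflect (forall x y, adj Y (g x) (g y) = adj Y x y) (g \in Aut Y).
Proof.
rewrite inE; apply: (iffP forallP) => [gA x y | gA x].
  by apply/eqP; have /forallP := gA x.
by apply/forallP => y; rewrite gA.
Qed.

Lemma Aut_group_set (Y : graph) : group_set (Aut Y).
Proof.
apply/group_setP; split; first by apply/AutP => x y; rewrite !perm1.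
by move=> g h /AutP gA /AutP hA; apply/AutP => x y; rewrite !permM hA gA.
Qed.
Canonical Aut_group (Y : graph) := Group (Aut_group_set Y).

Section Covers.
Variables (Y Yt : graph) (p : vert Yt -> vert Y).

Lemma CTP (c : {perm vert Yt}) :
  reflect (c \in Aut Yt /\ forall x, p (c x) = p x) (c \in CT p).
Proof.
rewrite [in X in reflect _ X]in_set.
apply: (iffP andP) => [[cA /forallP cp] | [cA cp]]; split=> //.
  by move=> x; apply/eqP.
by apply/forallP => x; rewrite cp.
Qed.

Lemma CT_group_set : group_set (CT p).
Proof.
apply/group_setP; split; first by apply/CTP; split=> [|x]; rewrite ?group1 ?perm1.
move=> c d /CTP[cA cp] /CTP[dA dp]; apply/CTP; split; first exact: groupM.
by move=> x; rewrite permM dp cp.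
Qed.
Canonical CT_group := Group CT_group_set.

Lemma is_liftP (g : {perm vert Y}) (gt : {perm vert Yt}) :
  reflect (forall x, p (gt x) = g (p x)) (is_lift p g gt).
Proof. by apply: (iffP forallP) => gl x; [apply/eqP | rewrite gl]. Qed.

Lemma liftedP (K : {set {perm vert Y}}) (gt : {perm vert Yt}) :
  reflect (gt \in Aut Yt /\ exists2 g, g \in K & forall x, p (gt x) = g (p x))
    (gt \in lifted p K).
Proof.
rewrite [in X in reflect _ X]in_set.
apply: (iffP andP) => [[gtA /existsP[g /andP[gK /is_liftP gl]]] | ].
  by split=> //; exists g.
by case=> gtA [g gK gl]; split=> //; apply/existsP; exists g; rewrite gK; apply/is_liftP.
Qed.

Lemma lifts_mulV_CT (g : {perm vert Y}) (gt ht : {perm vert Yt}) :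
  gt \in Aut Yt -> ht \in Aut Yt ->
  (forall x, p (gt x) = g (p x)) -> (forall x, p (ht x) = g (p x)) ->
  gt * ht^-1 \in CT p.
Proof.
move=> gtA htA gtl htl; apply/CTP; split=> [|x]; first by rewrite groupM ?groupV.
by apply: (@perm_inj _ g); rewrite permM -htl -gtl permKV.
Qed.

Variable K : {group {perm vert Y}}.

Lemma lifted_group_set : group_set (lifted p K).
Proof.
apply/group_setP; split.
  by apply/liftedP; split; [exact: group1 | exists 1 => // x; rewrite !perm1].
move=> g h /liftedP[gA [g0 g0K gl]] /liftedP[hA [h0 h0K hl]].
apply/liftedP; split; first exact: groupM.
by exists (g0 * h0) => [|x]; rewrite ?groupM // !permM hl gl.
Qed.
Canonical lifted_group := Group lifted_group_set.

Lemma lifted_subAut : lifted p K \subset Aut Yt.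
Proof. by apply/subsetP => g /liftedP[]. Qed.

Lemma CT_sub_lifted : CT p \subset lifted p K.
Proof.
apply/subsetP => c /CTP[cA cp]; apply/liftedP; split=> //.
by exists 1 => // x; rewrite cp perm1.
Qed.

Lemma CT_conj_lifted (c g : {perm vert Yt}) :
  c \in CT p -> g \in lifted p K -> c ^ g \in CT p.
Proof.
move=> /CTP[cA cp] /liftedP[gA [g0 _ gl]]; apply/CTP; split; first exact: groupJ.
by move=> x; rewrite conjgE !permM gl cp -gl -permM mulVg perm1.
Qed.

Lemma lifted_norm_CT : lifted p K \subset 'N(CT p).
Proof.
apply/normsP => g gL; apply/eqP; rewrite eqEcard cardJg leqnn andbT.
apply/subsetP => c; by rewrite mem_conjg => /CT_conj_lifted/(_ gL); rewrite conjgKV.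
Qed.

Lemma CT_vert_gt0 : 1 < #|CT p| -> 0 < #|vert Yt|.
Proof.
rewrite lt0n; apply: contraTneq => /card0_eq vert0.
suff /subset_leq_card : CT p \subset [1] by rewrite cards1 leqNgt.
by apply/subsetP => c _; rewrite inE; apply/eqP/permP => x; have := vert0 x.
Qed.

Hypothesis pcov : covering_projection p.

Lemma CT_fix1 (c : {perm vert Yt}) x : c \in CT p -> c x = x -> c = 1.
Proof.
case: pcov => _ _ p_inj _ /CTP[/AutP cA cp] cx; apply/permP => y; rewrite perm1.
have /connectP[s] := adj_conn x y; elim: s x cx => [|z s IHs] w /=; first by move=> cw _ ->.
move=> cw /andP[wz sz] ly; apply: IHs sz ly; apply: (p_inj w); rewrite ?cp //.
by rewrite -cA cw in wz.
Qed.

Lemma CT_point_inj (x : vert Yt) :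
  {in CT p &, injective (fun c : {perm vert Yt} => c x)}.
Proof.
move=> c d cC dC /= cdx; apply/eqP; rewrite -(inj_eq (mulIg d^-1)) mulgV; apply/eqP.
by apply: (CT_fix1 (x := x)); rewrite ?groupM ?groupV // permM cdx permK.
Qed.

Lemma CT_mem_subgroup (S : {group {perm vert Yt}}) d :
  S \subset CT p -> d \in CT p ->
  (forall x, exists2 c, c \in S & c x = d x) -> d \in S.
Proof.
move=> sSC dC dS; case: (pickP (@predT (vert Yt))) => [x _ | vert0]; last first.
  by have -> : d = 1 by apply/permP => x; have := vert0 x.
by have [c cS /(CT_point_inj (subsetP sSC _ cS) dC) <-] := dS x.
Qed.

End Covers.

Lemma card_fibre (Y Yt : graph) (p : vert Yt -> vert Y) x :
  regular_cover p -> #|[set x' | p x' == p x]| = #|CT p|.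
Proof.
case=> pcov preg; rewrite -(card_in_imset (CT_point_inj pcov (x := x))); apply/eq_card => y.
rewrite inE; apply/eqP/imsetP => [/esym/preg[c [[cC <-] _]] | [c /CTP[_ cp] ->]].
  by exists c.
exact: cp.
Qed.

Section Sections.
Variables (Y Yt : graph) (p : vert Yt -> vert Y) (S : {set vert Yt}).
Hypothesis secS : section p S.

Lemma section_fibre y : exists2 x, x \in S & p x = y.
Proof.
have /eqP/cards1P[x Sy] := secS y.
by have := set11 x; rewrite -Sy inE => /andP[xS /eqP]; exists x.
Qed.

Lemma section_inj : {in S &, injective p}.
Proof.
move=> x x' xS x'S pxx'; have /eqP/cards1P[z Sz] := secS (p x).
have fibre u : u \in S -> p u = p x -> u = z.
  by move=> uS pu; apply/set1P; rewrite -Sz inE uS pu eqxx.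
by rewrite (fibre x xS) // (fibre x' x'S).
Qed.

End Sections.

Lemma vertex_transitive_proj (Y Yt : graph) (p : vert Yt -> vert Y)
    (A : {set {perm vert Yt}}) (B : {set {perm vert Y}}) :
  (forall y, exists x, p x = y) ->
  (forall a, a \in A -> exists2 b, b \in B & forall x, p (a x) = b (p x)) ->
  vertex_transitive A -> vertex_transitive B.
Proof.
move=> psurj AB /imsetP[x0 _ Ax0]; apply/imsetP; exists (p x0); rewrite ?inE //.
apply/setP => y; rewrite inE; have [x <-] := psurj y.
have : x \in orbit 'P A x0 by rewrite -Ax0 inE.
case/orbitP=> a aA <-; have [b bB ab] := AB a aA.
by apply/esym/orbitP; exists b; rewrite //= ab.
Qed.

Section Composition.
Variables (X0 X1 X2 : graph) (p1 : vert X1 -> vert X0) (p2 : vert X2 -> vert X1).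

Lemma cover_comp :
  covering_projection p1 -> covering_projection p2 ->
  covering_projection (p1 \o p2).
Proof.
case=> s1 h1 i1 l1 [s2 h2 i2 l2]; split => /=.
- by move=> y; have [x1 <-] := s1 y; have [x2 <-] := s2 x1; exists x2.
- by move=> x x' /h2 /h1.
- move=> x y y' xy xy' e; apply: (i2 x) => //.
  by apply: (i1 (p2 x)) => //; apply: h2.
- move=> x w /l1[x1 a1 <-]; have [x2 a2 e2] := l2 _ _ a1.
  by exists x2; rewrite ?e2.
Qed.

Lemma CT_sub_CT_comp : CT p2 \subset CT (p1 \o p2).
Proof. by apply/subsetP => c /CTP[cA cp]; apply/CTP; split=> // x /=; rewrite cp. Qed.

Lemma lifted_comp_sub (G : {set {perm vert X0}}) :
  lifted p2 (lifted p1 G) \subset lifted (p1 \o p2) G.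
Proof.
apply/subsetP => g /liftedP[gA [g1 /liftedP[_ [g0 g0G g1l]] gl]].
by apply/liftedP; split=> //; exists g0 => // x /=; rewrite gl g1l.
Qed.

Lemma card_fibre_comp x :
  regular_cover p1 -> regular_cover p2 ->
  #|[set x' | (p1 \o p2) x' == (p1 \o p2) x]| = (#|CT p1| * #|CT p2|)%N.
Proof.
move=> reg1 reg2; rewrite -(card_fibre (p2 x) reg1) -sum_nat_const -sum1_card.
rewrite (partition_big p2 (fun z => p1 z == p1 (p2 x))) => [|y]; last by rewrite inE.
apply: eq_big => [z | z]; first by rewrite inE.
case: reg2.1 => + _ _ _ => /(_ z)[y <-] yx.
rewrite -(card_fibre y reg2) -sum1_card; apply: eq_bigl => x'.
by rewrite !inE /= andbC; case: eqP => //= ->.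
Qed.

End Composition.

Lemma cover_factor (Y W Z : graph) (r : vert Z -> vert W) (s : vert W -> vert Y)
    (f : vert Z -> vert Y) :
  covering_projection r -> covering_projection f -> (forall z, s (r z) = f z) ->
  covering_projection s.
Proof.
case=> sr hr ir lr [sf hf if_ lf] srf; split.
- by move=> y; have [z <-] := sf y; exists (r z).
- move=> a b; have [z <-] := sr a; case/lr=> z' zz' <-; rewrite !srf; exact: hf.
- move=> a b b'; have [z <-] := sr a; case/lr=> y zy <- /lr[y' zy' <-].
  by rewrite !srf => /(if_ z y y') ->.
- move=> a w; have [z <-] := sr a; rewrite srf; case/lf=> y zy <-.
  by exists (r y); [exact: hr | exact: srf].
Qed.

Lemma compl_card2_normal (gT : finGroupType) (G T H : {group gT}) :
  H \in [complements to T in G] -> #|T| = 2 -> H <| G.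
Proof.
case/complP=> tiTH defG cardT; have sHG : H \subset G by rewrite -defG mulG_subr.
apply: (index2_normal sHG); apply/eqP.
rewrite -(eqn_pmul2l (cardG_gt0 H)) (Lagrange sHG).
by have := TI_cardMg tiTH; rewrite defG cardT mulnC => ->.
Qed.

Section ComplementsUnderMorphism.
Variables (aT rT : finGroupType) (D : {group aT}) (f : {morphism D >-> rT}).
Variable T : {group aT}.

Lemma morphim_compl (H : {group aT}) :
  'ker f \subset H -> H \in [complements to T in D] ->
  (f @* H)%G \in [complements to f @* T in f @* D].
Proof.
move=> kerH /complP[tiTH defD]; apply/complP; split.
  by rewrite -morphimIG // tiTH morphim1.
by rewrite -morphimMl ?defD // -defD mulG_subl.
Qed.

Lemma morphpre_compl (H' : {group rT}) :
  T \subset D -> T :&: 'ker f = 1 -> H' \in [complements to f @* T in f @* D] ->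
  (f @*^-1 H')%G \in [complements to T in D].
Proof.
move=> sTD tiTker /complP[tiTH' defD']; apply/complP; split.
  apply/trivgP; rewrite -tiTker kerE -tiTH' morphpreI subsetI subsetIl /=.
  by rewrite setSI // -sub_morphim_pre.
apply/eqP; rewrite eqEsubset mul_subG ?morphpre_sub //=.
rewrite -{1}(morphimGK (morphpre_sub f 1) (subxx D)) -defD' morphpreMl ?morphimS //.
by rewrite morphimK // -(normC (subset_trans sTD (ker_norm f))) -mulgA mulSGid ?ker_sub_pre.
Qed.

End ComplementsUnderMorphism.

Section Quotient.
Variables (X Y : graph) (f : vert X -> vert Y) (N : {group {perm vert X}}).
Hypotheses (fcov : covering_projection f) (sNCT : N \subset CT f).

Lemma quot_subAut : N \subset Aut X.
Proof. by apply/subsetP => c /(subsetP sNCT)/CTP[]. Qed.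

Lemma orbit_fibre (x y : vert X) : y \in orbit 'P N x -> f y = f x.
Proof. by case/orbitP=> c /(subsetP sNCT)/CTP[_ cf] <-; apply: cf. Qed.

Definition quot_vert := {A : {set vert X} | [exists x, A == orbit 'P N x]}.

Fact quot_proj_subproof x : [exists y, orbit 'P N x == orbit 'P N y].
Proof. by apply/existsP; exists x. Qed.

Definition quot_proj (x : vert X) : quot_vert :=
  exist _ (orbit 'P N x) (quot_proj_subproof x).

Lemma quot_projP x y : reflect (quot_proj x = quot_proj y) (y \in orbit 'P N x).
Proof.
apply: (iffP idP) => [/orbit_eqP xy | /(congr1 val)/= ->]; last exact: orbit_refl.
by apply: val_inj; rewrite /= xy.
Qed.

Definition quot_repr (A : quot_vert) : vert X := xchoose (existsP (valP A)).

Lemma quot_reprK : cancel quot_repr quot_proj.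
Proof. by move=> A; apply: val_inj; apply/esym/eqP/(xchooseP (existsP (valP A))). Qed.

Lemma quot_proj_surj A : exists x, quot_proj x = A.
Proof. by exists (quot_repr A); apply: quot_reprK. Qed.

Definition quot_adj : rel quot_vert := fun A B =>
  [exists x, exists y, [&& quot_proj x == A, quot_proj y == B & adj X x y]].

Lemma quot_adj_proj x y : adj X x y -> quot_adj (quot_proj x) (quot_proj y).
Proof. by move=> xy; apply/existsP; exists x; apply/existsP; exists y; rewrite !eqxx. Qed.

Lemma quot_adj_lift x B :
  quot_adj (quot_proj x) B -> exists2 y, adj X x y & quot_proj y = B.
Proof.
case/existsP=> x0 /existsP[y0 /and3P[/eqP/quot_projP/orbitP[c cN <-] /eqP <- x0y0]].
exists (c y0); last by apply/esym/quot_projP/orbitP; exists c.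
by have /AutP-> := subsetP quot_subAut _ cN.
Qed.

Lemma quot_adj_sym : symmetric quot_adj.
Proof.
apply: symmetric_from_pre => A B /existsP[x /existsP[y /and3P[xA yB xy]]].
by apply/existsP; exists y; apply/existsP; exists x; rewrite xA yB adj_sym.
Qed.

Lemma quot_adj_irr : irreflexive quot_adj.
Proof.
move=> A; have [x <-] := quot_proj_surj A; apply/negbTE/negP.
case/quot_adj_lift=> y xy /esym/quot_projP/orbit_fibre fyx.
by case: fcov => _ /(_ x y xy); rewrite fyx adj_irr.
Qed.

Lemma quot_adj_conn A B : connect quot_adj A B.
Proof.
have [x <-] := quot_proj_surj A; have [y <-] := quot_proj_surj B.
exact: (connect_homo quot_adj_proj (adj_conn x y)).
Qed.

Definition quot_graph := Graph quot_adj_sym quot_adj_irr quot_adj_conn.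

Lemma quot_proj_cover : covering_projection (quot_proj : vert X -> vert quot_graph).
Proof.
case: fcov => _ _ f_inj _; split.
- exact: quot_proj_surj.
- exact: quot_adj_proj.
- by move=> x y y' xy xy' /esym/quot_projP/orbit_fibre; apply: (f_inj x).
- exact: quot_adj_lift.
Qed.

Lemma quot_sub_CT_proj : N \subset CT (quot_proj : vert X -> vert quot_graph).
Proof.
apply/subsetP => c cN; apply/CTP; split; first exact: (subsetP quot_subAut).
by move=> x; apply/esym/quot_projP/orbitP; exists c.
Qed.

Lemma CT_quot_proj : CT (quot_proj : vert X -> vert quot_graph) = N.
Proof.
apply/eqP; rewrite eqEsubset quot_sub_CT_proj andbT; apply/subsetP => d dC.
have /CTP[dA dq] := dC.
have dCf : d \in CT f by apply/CTP; split=> // x; apply/orbit_fibre/quot_projP.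
apply: (CT_mem_subgroup fcov sNCT dCf) => x.
by have /esym/quot_projP/orbitP[c cN cx] := dq x; exists c.
Qed.

Lemma quot_proj_regular : regular_cover (quot_proj : vert X -> vert quot_graph).
Proof.
split=> [|x x' /quot_projP/orbitP[c cN cx]]; first exact: quot_proj_cover.
have cC := subsetP quot_sub_CT_proj _ cN.
exists c; split=> // d [dC dx]; apply: (CT_point_inj quot_proj_cover (x := x)) => //.
by rewrite dx.
Qed.

Lemma orbit_norm (g : {perm vert X}) x y :
  g \in 'N(N) -> y \in orbit 'P N x -> g y \in orbit 'P N (g x).
Proof.
move=> gN /orbitP[c cN <-]; apply/orbitP; exists (c ^ g); first by rewrite memJ_norm.
by rewrite /= !apermE permJ.
Qed.

(* Outside 'N(N) the action is a junk value (the identity). *)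
Definition quot_act (g : {perm vert X}) (A : quot_vert) : quot_vert :=
  if g \in 'N(N) then quot_proj (g (quot_repr A)) else A.

Lemma quot_actE g x : g \in 'N(N) -> quot_act g (quot_proj x) = quot_proj (g x).
Proof.
move=> gN; rewrite /quot_act gN; apply/esym/quot_projP/orbit_norm => //.
by apply/quot_projP; rewrite quot_reprK.
Qed.

Lemma quot_act_inj g : injective (quot_act g).
Proof.
move=> A B; rewrite /quot_act; case: ifP => // gN /esym/quot_projP.
by move/(orbit_norm (groupVr gN)); rewrite !permK => /quot_projP; rewrite !quot_reprK.
Qed.

Definition quot_perm g : {perm quot_vert} := perm (@quot_act_inj g).

Lemma quot_permE g x : g \in 'N(N) -> quot_perm g (quot_proj x) = quot_proj (g x).
Proof. by move=> gN; rewrite permE quot_actE. Qed.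

Lemma quot_permM : {in 'N(N) &, {morph quot_perm : g h / g * h}}.
Proof.
move=> g h gN hN; apply/permP => A; have [x <-] := quot_proj_surj A.
by rewrite permM !quot_permE ?groupM // permM.
Qed.

Canonical quot_morphism := Morphism quot_permM.

Lemma quot_perm_adj g A B :
  g \in 'N(N) -> g \in Aut X -> quot_adj A B -> quot_adj (quot_perm g A) (quot_perm g B).
Proof.
move=> gN /AutP gA; have [x <-] := quot_proj_surj A; case/quot_adj_lift=> y xy <-.
by rewrite !quot_permE //; apply: quot_adj_proj; rewrite gA.
Qed.

Lemma quot_perm_Aut g : g \in 'N(N) -> g \in Aut X -> quot_perm g \in Aut quot_graph.
Proof.
move=> gN gA; apply/AutP => A B /=; apply/idP/idP; last exact: quot_perm_adj.
move/(quot_perm_adj (groupVr gN) (groupVr gA)).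
by rewrite (morphV quot_morphism gN) !permK.
Qed.

Lemma ker_quot_morphism : 'ker_(Aut X) quot_morphism = N.
Proof.
apply/eqP; rewrite eqEsubset subsetI quot_subAut /=; apply/andP; split.
  apply/subsetP => g /setIP[gA /morphpreP[gN /set1P g1]].
  have gx x : g x \in orbit 'P N x by apply/quot_projP; rewrite -quot_permE // g1 perm1.
  have gCf : g \in CT f by apply/CTP; split=> // x; apply: orbit_fibre.
  by apply: (CT_mem_subgroup fcov sNCT gCf) => x; have /orbitP[c cN cx] := gx x; exists c.
apply/subsetP => c cN; have cNN := subsetP (normG N) _ cN.
apply/kerP => //; apply/permP => A; have [x <-] := quot_proj_surj A.
by rewrite quot_permE // perm1; apply/esym/quot_projP/orbitP; exists c.
Qed.

Definition quot_base (A : quot_vert) : vert Y := f (quot_repr A).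

Lemma quot_baseE x : quot_base (quot_proj x) = f x.
Proof. by apply/orbit_fibre/quot_projP; rewrite quot_reprK. Qed.

Lemma quot_base_cover : covering_projection (quot_base : vert quot_graph -> vert Y).
Proof. exact: (cover_factor quot_proj_cover fcov quot_baseE). Qed.

Lemma quot_perm_lift g (g0 : {perm vert Y}) :
  g \in 'N(N) -> (forall x, f (g x) = g0 (f x)) ->
  forall A, quot_base (quot_perm g A) = g0 (quot_base A).
Proof.
by move=> gN gl A; have [x <-] := quot_proj_surj A; rewrite quot_permE // !quot_baseE.
Qed.

Lemma quot_perm_CT k :
  k \in CT f -> k \in 'N(N) -> quot_perm k \in CT (quot_base : vert quot_graph -> vert Y).
Proof.
case/CTP=> kA kf kN; apply/CTP; split; first exact: quot_perm_Aut.
by move=> A; rewrite (quot_perm_lift (g0 := 1) kN) ?perm1 // => x; rewrite kf perm1.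
Qed.

Hypotheses (f_fibre_trans : forall x x', f x = f x' -> exists2 k, k \in CT f & k x = x')
  (sCTN : CT f \subset 'N(N)).

Lemma quot_base_fibre_trans A A' :
  quot_base A = quot_base A' -> exists2 k, k \in CT f & quot_perm k A = A'.
Proof.
move/f_fibre_trans=> [k kC kx]; exists k => //.
by rewrite -(quot_reprK A) quot_permE ?(subsetP sCTN) // kx quot_reprK.
Qed.

Lemma quot_base_regular : regular_cover (quot_base : vert quot_graph -> vert Y).
Proof.
split=> [|A A' /quot_base_fibre_trans[k kC kA]]; first exact: quot_base_cover.
have kC' := quot_perm_CT kC (subsetP sCTN _ kC).
exists (quot_perm k); split=> // d [dC dA].
by apply: (CT_point_inj quot_base_cover (x := A)); rewrite ?dA.
Qed.

Lemma CT_quot_base :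
  CT (quot_base : vert quot_graph -> vert Y) = quot_morphism @* CT f.
Proof.
rewrite (morphimEsub _ sCTN); apply/setP => d; apply/idP/imsetP => [dC | [k kC ->]]; last first.
  exact: quot_perm_CT (subsetP sCTN _ kC).
case: (pickP (@predT quot_vert)) => [A _ | vert0]; last first.
  by exists 1; rewrite ?group1 //; apply/permP => A; have := vert0 A.
have /CTP[_ /(_ A)/esym/quot_base_fibre_trans[k kC kA]] := dC; exists k => //.
have kCT := quot_perm_CT kC (subsetP sCTN _ kC).
by apply: (CT_point_inj quot_base_cover (x := A)); rewrite ?kA.
Qed.
End Quotient.

Section TwoCoverChain.
Variables (X0 X1 X2 : graph) (G : {group {perm vert X0}}).
Variables (p1 : vert X1 -> vert X0) (p2 : vert X2 -> vert X1).
Hypotheses (reg1 : regular_cover p1) (reg2 : regular_cover p2).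
Hypotheses (cardCT1 : #|CT p1| = 2) (cardCT2 : #|CT p2| = 2).
Hypotheses (lift1 : lifts p1 G) (lift2 : lifts p2 (lifted p1 G)).

Local Notation p12 := (p1 \o p2).
Local Notation G1 := (lifted_group p1 G).
Local Notation G2 := (lifted_group p2 G1).
Local Notation K := (CT_group p12).
Local Notation T := (CT_group p2).

Lemma lifts_comp g0 : g0 \in G -> exists2 g, g \in G2 & forall x, p12 (g x) = g0 (p12 x).
Proof.
move=> g0G; have [g1 g1A /is_liftP g1l] := lift1 g0G.
have g1G : g1 \in G1 by apply/liftedP; split=> //; exists g0.
have [g g2A /is_liftP gl] := lift2 g1G.
by exists g => [|x /=]; [apply/liftedP; split=> //; exists g1 | rewrite gl g1l].
Qed.

Lemma comp_fibre_trans x x' : p12 x = p12 x' -> exists2 k, k \in K :&: G2 & k x = x'.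
Proof.
move=> /reg1.2[c1 [[c1C c1x] _]].
have [c2 c2A /is_liftP c2l] := lift2 (subsetP (CT_sub_lifted p1 G) _ c1C).
have c2G : c2 \in G2.
  by apply/liftedP; split=> //; exists c1 => //; apply: (subsetP (CT_sub_lifted p1 G)).
have /reg2.2[t [[tC tx] _]] : p2 (c2 x) = p2 x' by rewrite c2l c1x.
have tG := subsetP (CT_sub_lifted p2 G1) _ tC.
exists (c2 * t); last by rewrite permM tx.
apply/setIP; split; last exact: groupM.
have /CTP[_ c1p] := c1C; have /CTP[tA tp] := tC.
by apply/CTP; split=> [|y /=]; rewrite ?groupM // permM tp c2l c1p.
Qed.

Lemma comp_fibre_CT x x' : p12 x = p12 x' -> exists2 k, k \in K & k x = x'.
Proof. by case/comp_fibre_trans=> k /setIP[kK _]; exists k. Qed.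

Lemma comp_regular : regular_cover p12.
Proof.
split=> [|x x' /comp_fibre_CT[k kK kx]]; first exact: cover_comp reg1.1 reg2.1.
exists k; split=> // d [dK dx]; apply: (CT_point_inj (cover_comp reg1.1 reg2.1) (x := x)) => //.
by rewrite dx.
Qed.

Lemma CT_comp_sub : K \subset G2.
Proof.
apply/subsetP => k kK; suff: k \in (K :&: G2)%G by case/setIP.
apply: (CT_mem_subgroup comp_regular.1 (subsetIl _ _) kK) => x.
by have /CTP[_ kp] := kK; apply: comp_fibre_trans; rewrite kp.
Qed.

Lemma CT_comp_normal : K <| G2.
Proof.
rewrite /normal CT_comp_sub.
exact: subset_trans (lifted_comp_sub p1 p2 G) (lifted_norm_CT _ _).
Qed.

Lemma card_CT_comp : #|K| = 4.
Proof.
have /card_gt0P[x _] : 0 < #|vert X2| by apply: (CT_vert_gt0 (p := p2)); rewrite cardCT2.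
by rewrite -(card_fibre x comp_regular) card_fibre_comp // cardCT1 cardCT2.
Qed.

Variable H : {group {perm vert X2}}.
Hypothesis compH : H \in [complements to T in G2].

Local Notation N := (H :&: K)%G.

Lemma N_normal : N <| G2.
Proof. exact: normalI (compl_card2_normal compH cardCT2) CT_comp_normal. Qed.

Lemma sNG2 : N \subset G2. Proof. exact: normal_sub N_normal. Qed.
Lemma sG2N : G2 \subset 'N(N). Proof. exact: normal_norm N_normal. Qed.
Lemma sNCT : N \subset CT p12. Proof. exact: subsetIr. Qed.

Lemma mul_CT_N : T * N = K.
Proof.
case/complP: compH => _ defG2.
by rewrite (group_modl _ (CT_sub_CT_comp p1 p2)) defG2; apply/setIidPr/CT_comp_sub.
Qed.

Lemma CT_N_trivI : T :&: N = 1.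
Proof. by case/complP: compH => tiTH _; apply/trivgP; rewrite -tiTH setIS ?subsetIl. Qed.

Lemma card_N : #|N| = 2.
Proof.
have := TI_cardMg CT_N_trivI; rewrite mul_CT_N card_CT_comp cardCT2.
by move/esym/eqP; rewrite -[4]/(2 * 2)%N eqn_pmul2l // => /eqP.
Qed.

Local Notation X1' := (quot_graph comp_regular.1 sNCT).
Local Notation p2' := (quot_proj N : vert X2 -> vert X1').
Local Notation p1' := (quot_base p12 (N := N) : vert X1' -> vert X0).
Local Notation psi := (restrm sG2N (quot_morphism N)).

Lemma ker_psi : 'ker psi = N.
Proof.
have kerN := ker_quot_morphism comp_regular.1 sNCT.
rewrite ker_restrm; apply/eqP; rewrite eqEsubset subsetI sNG2 /=; apply/andP; split.
  by apply: subset_trans (setSI _ (lifted_subAut p2 G1)) _; rewrite kerN.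
by have := subsetIr (Aut X2) ('ker (quot_morphism N)); rewrite kerN.
Qed.

Lemma psi_lift g x : g \in G2 -> p2' (g x) = psi g (p2' x).
Proof. by move=> gG; rewrite /= quot_permE // (subsetP sG2N). Qed.

Lemma psi_Aut g : g \in G2 -> psi g \in Aut X1'.
Proof.
move=> gG; exact: quot_perm_Aut (subsetP sG2N _ gG) (subsetP (lifted_subAut p2 G1) _ gG).
Qed.

Lemma psi_lift_base g (g0 : {perm vert X0}) :
  g \in G2 -> (forall x, p12 (g x) = g0 (p12 x)) ->
  forall A, p1' (psi g A) = g0 (p1' A).
Proof. by move=> gG; apply: (quot_perm_lift sNCT (subsetP sG2N _ gG)). Qed.

Lemma psi_lifted g : g \in G2 -> psi g \in lifted p1' G.
Proof.
move=> gG; have /liftedP[_ [g0 g0G gl]] := subsetP (lifted_comp_sub p1 p2 G) _ gG.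
by apply/liftedP; split; [exact: psi_Aut | exists g0 => //; apply: psi_lift_base].
Qed.

Lemma CT_p1' : CT p1' = psi @* T.
Proof.
rewrite (CT_quot_base _ _ comp_fibre_CT (subset_trans CT_comp_sub sG2N)).
have -> : quot_morphism N @* K = psi @* K by rewrite morphim_restrm (setIidPr CT_comp_sub).
rewrite -[X in psi @* X]mul_CT_N morphimMl ?CT_sub_lifted //.
by rewrite -[X in _ * (psi @* X)]ker_psi morphim_ker mulg1.
Qed.

Lemma lifted_p1' : lifted p1' G = psi @* G2.
Proof.
rewrite (morphimEsub psi (subxx _)); apply/setP => g'.
apply/idP/imsetP => [g'L | [g gG ->]]; last exact: psi_lifted.
have /liftedP[g'A [g0 g0G g'l]] := g'L; have [g gG gl] := lifts_comp g0G.
have /(lifts_mulV_CT g'A (psi_Aut gG) g'l) := psi_lift_base gG gl.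
rewrite CT_p1' (morphimEsub psi (CT_sub_lifted p2 G1)) => /imsetP[t tT tE].
have tG := subsetP (CT_sub_lifted p2 G1) _ tT.
by exists (t * g); rewrite ?groupM // morphM // -tE mulgKV.
Qed.

Lemma two_cover_p2' : two_cover p2'.
Proof.
by split; [exact: quot_proj_regular | rewrite (CT_quot_proj comp_regular.1 sNCT) card_N].
Qed.

Lemma two_cover_p1' : two_cover p1'.
Proof.
split; first exact: (quot_base_regular _ _ comp_fibre_CT (subset_trans CT_comp_sub sG2N)).
rewrite CT_p1' card_morphim ker_psi (setIidPr (CT_sub_lifted p2 G1)).
by rewrite -indexgI CT_N_trivI indexg1.
Qed.

Lemma admissible_quot : admissible2 G p1' p2'.
Proof.
split; [exact: two_cover_p1' | exact: two_cover_p2' | |].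
  move=> g0 g0G; have [g gG gl] := lifts_comp g0G.
  by exists (psi g); [exact: psi_Aut | apply/is_liftP/psi_lift_base].
move=> g'; rewrite lifted_p1' (morphimEsub psi (subxx _)) => /imsetP[g gG ->].
by exists g; [exact: (subsetP (lifted_subAut p2 G1)) | apply/is_liftP => x; apply: psi_lift].
Qed.

Lemma split_quot : split p1' G.
Proof.
exists (psi @* H)%G; rewrite CT_p1' lifted_p1'.
by apply: morphim_compl compH; rewrite ker_psi subsetIl.
Qed.

Section InvariantSection.
Variable S : {set vert X2}.
Hypotheses (secS : section p2 S) (SN : forall c x, c \in N -> x \in S -> c x \in S).

Lemma section_fibre_orbit x x' :
  x \in S -> x' \in S -> p12 x = p12 x' -> x' \in orbit 'P N x.
Proof.
move=> xS x'S /comp_fibre_CT[k]; rewrite -mul_CT_N => /mulsgP[t c tT cN ->].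
rewrite permM => ctx; have /CTP[_ tp] := tT.
have txS : t x \in S by rewrite -(permK c (t x)) ctx SN ?groupV.
move: ctx; rewrite (section_inj secS txS xS (tp x)) => <-.
by apply/orbitP; exists c.
Qed.

Lemma section_quot : section p1' (p2' @: S).
Proof.
move=> v; have [x xS xv] : exists2 x, x \in S & p12 x = v.
  case: reg1.1 => + _ _ _ => /(_ v)[y <-].
  by have [x xS <-] := section_fibre secS y; exists x.
apply/eqP/cards1P; exists (p2' x); apply/setP => A; rewrite !inE.
apply/andP/eqP => [[/imsetP[x' x'S ->]] | ->]; last by rewrite imset_f ?(quot_baseE sNCT) ?xv.
rewrite (quot_baseE sNCT) -xv => /eqP/esym/(section_fibre_orbit xS x'S).
by move/quot_projP/esym.
Qed.

End InvariantSection.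

Section ComplementTransfer.
Variable H' : {group {perm vert X1'}}.
Hypothesis compH' : H' \in [complements to CT p1' in lifted p1' G].

Lemma compl_morphpre : (psi @*^-1 H')%G \in [complements to T in G2].
Proof.
move: compH'; rewrite CT_p1' lifted_p1'.
by apply: morphpre_compl; rewrite ?CT_sub_lifted ?ker_psi ?CT_N_trivI.
Qed.

Lemma transitive_morphpre : transitive_cmp (psi @*^-1 H') -> transitive_cmp H'.
Proof.
apply: (vertex_transitive_proj (Y := X1') (quot_proj_surj (N := N))).
by move=> h /morphpreP[hG hH']; exists (psi h) => // x; apply: psi_lift.
Qed.

Lemma sectional_morphpre : sectional p2 (psi @*^-1 H') -> sectional p1' H'.
Proof.
case=> S secS invS; exists (p2' @: S) => [|h' h'H'].
  apply: section_quot secS _ => c x cN xS.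
  have cH : c \in psi @*^-1 H' by rewrite (subsetP (ker_sub_pre psi H')) ?ker_psi.
  by rewrite -(invS c cH) imset_f.
have /complP[_ defL] := compH'.
have : h' \in psi @* G2 by rewrite -lifted_p1' -defL (subsetP (mulG_subr _ _)).
rewrite (morphimEsub psi (subxx _)) => /imsetP[h hG h'E].
have hH : h \in psi @*^-1 H' by apply/morphpreP; rewrite -h'E.
rewrite -imset_comp -{2}(invS h hH) -imset_comp; apply: eq_imset => x /=.
by rewrite h'E psi_lift.
Qed.

End ComplementTransfer.

Lemma quotient_chain :
  exists (X1' : graph) (p1' : vert X1' -> vert X0) (p2' : vert X2 -> vert X1'),
    [/\ admissible2 G p1' p2', split p1' G &
      forall H' : {group {perm vert X1'}},
        H' \in [complements to CT p1' in lifted p1' G] ->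
        exists2 Hp : {group {perm vert X2}}, Hp \in [complements to T in G2] &
          (transitive_cmp Hp -> transitive_cmp H') /\ (sectional p2 Hp -> sectional p1' H')].
Proof.
exists X1', p1', p2'; split=> [||H' compH']; [exact: admissible_quot | exact: split_quot |].
exists (psi @*^-1 H')%G; first exact: compl_morphpre.
by split; [exact: transitive_morphpre | exact: sectional_morphpre].
Qed.

End TwoCoverChain.

Theorem lemma5p2 (X0 X1 X2 : graph) (G : {group {perm vert X0}})
  (p1 : vert X1 -> vert X0) (p2 : vert X2 -> vert X1) :
  arc_transitive G ->
  admissible2 G p1 p2 ->
  (split_transitive p2 (lifted p1 G) ->
     exists (X1' : graph) (p1' : vert X1' -> vert X0) (p2' : vert X2 -> vert X1'),
       admissible2 G p1' p2' /\ split_transitive p1' G) /\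
  (split_sectional p2 (lifted p1 G) ->
     exists (X1' : graph) (p1' : vert X1' -> vert X0) (p2' : vert X2 -> vert X1'),
       admissible2 G p1' p2' /\ split_sectional p1' G).
Proof.
move=> _ [[reg1 cardCT1] [reg2 cardCT2] lift1 lift2].
have vtG : vertex_transitive (lifted p1 G) -> vertex_transitive G.
  case: reg1.1 => p1_surj _ _ _; apply: (vertex_transitive_proj p1_surj).
  by move=> g /liftedP[_ [g0 g0G gl]]; exists g0.
have chain := quotient_chain reg1 reg2 cardCT1 cardCT2 lift1 lift2.
split=> [[vt _ [H compH] trH] | [vt _ [H compH] secH]].
  have [X1' [p1' [p2' [adm spl transfer]]]] := chain H compH.
  exists X1', p1', p2'; split; first exact: adm.
  split; [exact: vtG | by case: adm | exact: spl |].
  by move=> H' /transfer[Hp /trH trHp [trH' _]]; exact: trH' trHp.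
have [X1' [p1' [p2' [adm spl transfer]]]] := chain H compH.
exists X1', p1', p2'; split; first exact: adm.
split; [exact: vtG | by case: adm | exact: spl |].
by move=> H' /transfer[Hp /secH secHp [_ secH']]; exact: secH' secHp.
Qed.
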